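(* Consider the following static pricing game. There are $n$ firms $i \in N = \{1,\dots,n\}$, each with marginal cost $c_i = 0$, selling a homogeneous good. A single buyer has willingness to pay (WTP) $\omega \in \Omega = \{\omega_1,\dots,\omega_m\}$, drawn from a distribution $F$. An information structure $\langle S,\mu\rangle$ is given, where $S = \prod_{i\in N} S_i$ is a finite signal space and $\mu$ is a joint distribution on $S \times \Omega$ whose marginal on $\Omega$ is $F$; upon realization of $\omega$, the signal profile $s=(s_1,\dots,s_n)$ is drawn from $\mu(\cdot\mid\omega)$ and firm $i$ privately observes $s_i$. Each firm $i$ chooses a price $p_i(s_i) \in \mathbb{R}$ as a function of its signal. Demand for firm $i$ is $q_i = 1$ if $p_i \le \omega$ and $p_i = \min_{j\in N} p_j$, with ties among firms quoting the same lowest price resolved uniformly at random, and $q_i = 0$ otherwise; firm $i$'s payoff is $\pi_i = p_i q_i$. Suppose the action space is $\mathbb{R}$ and that $F$ and the information structure $\langle S,\mu\rangle$ are common knowledge. Then: (1) There exists a Bayesian Nash equilibrium in which every player quotes price $p^N = 0$ under every signal. Furthermore, in every Bayesian Nash equilibrium, every player receives $0$ (expected) profit. (2) In the two-player case ($n=2$), the Bayesian Nash equilibrium described in (1) (every player quoting $0$ under every signal) is the unique Bayesian Nash equilibrium. (3) In the monopoly case ($n=1$, where the single firm sells iff $p \le \omega$), the optimal pricing strategy of the firm under any signal $s$ is $p^M(s) = \arg\max_p \, p \cdot \operatorname{Prob}(\omega \ge p \mid s)$.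
   Context: A Bayesian Nash equilibrium is a profile of signal-contingent pricing strategies $(p_i : S_i \to \mathbb{R})_{i\in N}$ such that, for every firm $i$ and every signal $s_i$ received with positive probability, $p_i(s_i)$ maximizes firm $i$'s expected payoff conditional on $s_i$, given the other firms' strategies, with expectations taken under $\mu$. *)

From HB Require Import structures.
From mathcomp Require Import all_boot all_order all_algebra.
Unset Printing Implicit Defensive.
Import Order.TTheory GRing.Theory Num.Theory.
Local Open Scope ring_scope.

Section PricingGame.
Variables (R : realFieldType) (n m : nat) (S : 'I_n -> finType)
          (omega : 'I_m -> R).

Definition profile := {dffun forall i : 'I_n, S i}.

(* mu s k = probability of (signal profile s, WTP omega k) *)
Variable mu : profile -> 'I_m -> R.

Definition is_info : Prop :=
  (forall s k, 0 <= mu s k) /\ \sum_(s : profile) \sum_(k < m) mu s k = 1.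

(* expected demand of firm i at price vector pr and WTP w:
   sells iff pr i <= w and pr i is the lowest price, ties split uniformly *)
Definition demand (pr : 'I_n -> R) (w : R) (i : 'I_n) : R :=
  if (pr i <= w) && [forall j, pr i <= pr j]
  then (#|[set j | pr j == pr i]|%:R)^-1 else 0.

Definition payoff (pr : 'I_n -> R) (w : R) (i : 'I_n) : R :=
  pr i * demand pr w i.

Definition strategy := forall i : 'I_n, S i -> R.

Definition prices (p : strategy) (s : profile) : 'I_n -> R :=
  fun j => p j (s j).

Definition dev_prices (p : strategy) (s : profile) (i : 'I_n) (x : R) : 'I_n -> R :=
  fun j => if j == i then x else p j (s j).

Definition sigprob (i : 'I_n) (si : S i) : R :=
  \sum_(s : profile | s i == si) \sum_(k < m) mu s k.

Definition cond_payoff (p : strategy) (i : 'I_n) (si : S i) (x : R) : R :=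
  (\sum_(s : profile | s i == si) \sum_(k < m)
      mu s k * payoff (dev_prices p s i x) (omega k) i) / sigprob i si.

Definition BNE (p : strategy) : Prop :=
  forall (i : 'I_n) (si : S i), 0 < sigprob i si ->
    forall x : R, cond_payoff p i si x <= cond_payoff p i si (p i si).

Definition exp_profit (p : strategy) (i : 'I_n) : R :=
  \sum_(s : profile) \sum_(k < m) mu s k * payoff (prices p s) (omega k) i.

Definition cond_prob_ge (i : 'I_n) (si : S i) (x : R) : R :=
  (\sum_(s : profile | s i == si) \sum_(k < m)
      mu s k * (if x <= omega k then 1 else 0)) / sigprob i si.

End PricingGame.

Arguments profile {n} S.
Arguments is_info {R n m S} mu.
Arguments demand {R n} pr w i.
Arguments payoff {R n} pr w i.
Arguments strategy R {n} S.
Arguments prices {R n S} p s _.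
Arguments dev_prices {R n S} p s i x _.
Arguments sigprob {R n m S} mu i si.
Arguments cond_payoff {R n m S} omega mu p i si x.
Arguments BNE {R n m S} omega mu p.
Arguments exp_profit {R n m S} omega mu p i.
Arguments cond_prob_ge {R n m S} omega mu i si x.

From HB Require Import structures.
From mathcomp Require Import all_boot all_order all_algebra.
From mathcomp Require Import ring lra.
(* Quoting 0 is always available and earns 0, so in a BNE every firm's conditional
   profit is nonnegative; with at least two firms, a deviation from the all-zero
   profile either prices at most 0 or is undercut by a rival quoting 0.
   For zero profits, let x be the highest price quoted by a firm i at a signal with
   positive conditional profit.  In some state i sells at x, so every rival j quotes
   at least x there.  Undercutting x secures j a conditional profit of at least
   x * W, where W is the mass of states in which x would win; so j is profitable,
   hence quotes exactly x by maximality of x, ties with i in that state and earns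
   strictly less than x * W.
   With two firms, a negative price would make the lowest bidder sell at a loss,
   while a positive price p_i(s_i) lets the rival undercut min(p_i(s_i), omega) in a
   state of positive mass, contradicting its zero profit.  A monopolist's
   conditional payoff is literally x * Prob(omega >= x | s). *)

Set Implicit Arguments.
Unset Strict Implicit.
Unset Printing Implicit Defensive.

Import Order.TTheory GRing.Theory Num.Theory.
Local Open Scope ring_scope.

Section SumFacts.
Variable R : realFieldType.

Lemma ler_sum_term (I : finType) (P : pred I) (F : I -> R) i0 :
  P i0 -> (forall i, P i -> 0 <= F i) -> F i0 <= \sum_(i | P i) F i.
Proof.
move=> P_i0 F_ge0; rewrite (bigD1 i0) //= lerDl.
by apply: sumr_ge0 => i /andP[P_i _]; exact: F_ge0.
Qed.

Lemma ler_dsum_term (I J : finType) (P : pred I) (F : I -> J -> R) i0 j0 :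
  P i0 -> (forall i j, P i -> 0 <= F i j) ->
  F i0 j0 <= \sum_(i | P i) \sum_j F i j.
Proof.
move=> P_i0 F_ge0; have sum_ge0 i : P i -> 0 <= \sum_j F i j.
  by move=> P_i; apply: sumr_ge0 => j _; exact: F_ge0.
apply: le_trans (ler_sum_term (F := fun i => \sum_j F i j) P_i0 sum_ge0).
by apply: ler_sum_term => // j _; exact: F_ge0.
Qed.

Lemma sumr_gt0_exists (I : finType) (P : pred I) (F : I -> R) :
  0 < \sum_(i | P i) F i -> exists2 i, P i & 0 < F i.
Proof.
move=> sum_gt0; apply/exists_inP; apply: contraLR sum_gt0 => /exists_inPn F_le0.
by rewrite -leNgt sumr_le0 // => i /F_le0; rewrite -leNgt.
Qed.

Lemma ler_mul_sup (x a b : R) : 0 < x -> 0 <= a ->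
  (forall c, 0 < c < x -> c * a <= b) -> x * a <= b.
Proof.
move=> x_gt0 a_ge0 le_b.
have b_ge0 : 0 <= b.
  by apply: le_trans (le_b (x / 2) _); rewrite ?mulr_ge0 //; lra.
rewrite leNgt; apply/negP => b_lt.
have a_gt0 : 0 < a.
  by rewrite lt_def a_ge0 andbT; apply: contraTneq b_lt => ->; rewrite mulr0 -leNgt.
have ba_lt : b / a < x by rewrite ltr_pdivrMr.
have ba_ge0 : 0 <= b / a by rewrite divr_ge0.
have c_mul : (b / a + x) / 2 * a = (b + x * a) / 2 by field; rewrite gt_eqF.
suff : (b + x * a) / 2 <= b by lra.
by rewrite -c_mul le_b //; apply/andP; split; lra.
Qed.

End SumFacts.

Section Demand.
Variables (R : realFieldType) (n : nat).
Implicit Types (pr : 'I_n -> R) (w : R).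

Definition wins pr w i : bool := (pr i <= w) && [forall j, pr i <= pr j].

Lemma demandE pr w i : demand pr w i =
  if wins pr w i then (#|[set j | pr j == pr i]|%:R)^-1 else 0.
Proof. by []. Qed.

Lemma eq_demand pr pr' w : pr =1 pr' -> demand pr w =1 demand pr' w.
Proof.
move=> eq_pr i; rewrite !demandE /wins.
have -> : [set j | pr j == pr i] = [set j | pr' j == pr' i].
  by apply/setP => j; rewrite !inE !eq_pr.
by rewrite (eq_forallb (P2 := fun j => pr' i <= pr' j)) ?eq_pr // => j; rewrite !eq_pr.
Qed.

Lemma eq_payoff pr pr' w : pr =1 pr' -> payoff pr w =1 payoff pr' w.
Proof. by move=> eq_pr i; rewrite /payoff eq_pr (eq_demand w eq_pr). Qed.

Lemma card_ties_gt0 pr i : (0 < #|[set j | pr j == pr i]|)%N.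
Proof. by apply/card_gt0P; exists i; rewrite inE. Qed.

Lemma demand_ge0 pr w i : 0 <= demand pr w i.
Proof. by rewrite demandE; case: ifP => _; rewrite ?invr_ge0 ?ler0n. Qed.

Lemma demand_le_wins pr w i : demand pr w i <= (wins pr w i)%:R.
Proof.
by rewrite demandE; case: ifP => // _; rewrite invf_le1 ?ltr0n ?card_ties_gt0 // ler1n card_ties_gt0.
Qed.

Lemma demand_gt0 pr w i : wins pr w i -> 0 < demand pr w i.
Proof. by move=> win; rewrite demandE win invr_gt0 ltr0n card_ties_gt0. Qed.

Lemma demand_eq1 pr w i :
  pr i <= w -> (forall j, j != i -> pr i < pr j) -> demand pr w i = 1.
Proof.
move=> le_w lt_pr; rewrite demandE /wins le_w.
have -> : [forall j, pr i <= pr j].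
  by apply/forallP => j; have [-> | /lt_pr/ltW //] := eqVneq j i.
have -> : [set j | pr j == pr i] = [set i].
  apply/setP => j; rewrite !inE; have [-> | ne_ji] := eqVneq j i; first exact: eqxx.
  by rewrite gt_eqF ?lt_pr.
by rewrite cards1 invr1.
Qed.

Lemma demand_tie pr w i j : i != j -> pr j = pr i -> demand pr w i <= 2^-1.
Proof.
move=> ne_ij eq_pr; rewrite demandE; case: ifP => _; last by rewrite invr_ge0 ler0n.
have two_ties : (2 <= #|[set l | pr l == pr i]|)%N.
  have <- : #|[set i; j]| = 2%N by rewrite cards2 ne_ij.
  apply/subset_leq_card/subsetP => l.
  by rewrite !inE => /orP[] /eqP ->; rewrite ?eq_pr eqxx.
by rewrite lef_pV2 ?posrE ?ltr0n ?ler_nat // (leq_trans _ two_ties).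
Qed.

Lemma payoff_le0 pr w i j : pr j <= 0 -> payoff pr w i <= 0.
Proof.
move=> prj_le0; rewrite /payoff; have [pri_le0 | pri_gt0] := lerP (pr i) 0.
  by rewrite mulr_le0_ge0 ?demand_ge0.
rewrite demandE /wins; case: ifP => [/andP[_ /forallP /(_ j)] | _]; last by rewrite mulr0.
by move=> le_prj; exfalso; lra.
Qed.

Lemma payoff_gt0 pr w i : 0 < payoff pr w i -> 0 < pr i /\ wins pr w i.
Proof.
move=> pay_gt0; split.
  apply: contraTT pay_gt0; rewrite -!leNgt => pr_le0.
  by rewrite /payoff mulr_le0_ge0 ?demand_ge0.
by apply: contraTT pay_gt0 => /negbTE lose; rewrite -leNgt /payoff demandE lose mulr0.
Qed.

End Demand.

Lemma demand_monopoly (R : realFieldType) (pr : 'I_1 -> R) w :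
  demand pr w ord0 = if pr ord0 <= w then 1 else 0.
Proof.
rewrite demandE /wins; have -> : [forall j, pr ord0 <= pr j].
  by apply/forallP => j; rewrite (ord1 j).
have -> : [set j | pr j == pr ord0] = [set ord0].
  by apply/setP => j; rewrite !inE (ord1 j) !eqxx.
by rewrite cards1 invr1 andbT.
Qed.

Lemma exists_neq_ord n : (1 < n)%N -> forall i : 'I_n, exists j, j != i.
Proof.
move=> n_gt1 i; have [i0 | i_ne0] := eqVneq (val i) 0%N.
  by exists (Ordinal n_gt1); apply/eqP => /(congr1 val); rewrite i0.
by exists (Ordinal (ltnW n_gt1)); apply: contraNneq i_ne0 => <-.
Qed.

Lemma ord2_neq (i j l : 'I_2) : j != i -> l != j -> l = i.
Proof. by case: i j l => [[|[|?]] ?] [[|[|?]] ?] [[|[|?]] ?] //= *; apply/val_inj. Qed.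

Section Game.
Variables (R : realFieldType) (n m : nat) (S : 'I_n -> finType).
Variables (omega : 'I_m -> R) (mu : profile S -> 'I_m -> R).
Hypothesis mu_ge0 : forall s k, 0 <= mu s k.
Implicit Types (p : strategy R S) (s : profile S).

Definition gain p i (si : S i) x :=
  \sum_(s : profile S | s i == si) \sum_(k < m) mu s k * payoff (dev_prices p s i x) (omega k) i.

Definition win_mass p j (t : S j) x :=
  \sum_(s : profile S | s j == t) \sum_(k < m) mu s k * (wins (dev_prices p s j x) (omega k) j)%:R.

Arguments gain : clear implicits.
Arguments win_mass : clear implicits.

Lemma cond_payoffE p i si x :
  cond_payoff omega mu p i si x = gain p i si x / sigprob mu i si.
Proof. by []. Qed.

Lemma dev_prices_at p s i x : dev_prices p s i x i = x.
Proof. by rewrite /dev_prices eqxx. Qed.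

Lemma dev_prices_other p s i x l : l != i -> dev_prices p s i x l = p l (s l).
Proof. by rewrite /dev_prices => /negbTE ->. Qed.

Lemma dev_prices_self p s i : dev_prices p s i (p i (s i)) =1 prices p s.
Proof. by move=> j; rewrite /dev_prices /prices; case: eqP => // ->. Qed.

Lemma gain0 p i si : gain p i si 0 = 0.
Proof.
by apply: big1 => s _; apply: big1 => k _; rewrite /payoff /dev_prices eqxx !mul0r mulr0.
Qed.

Lemma mu_le_sigprob i s k : mu s k <= sigprob mu i (s i).
Proof. by apply: ler_dsum_term. Qed.

Lemma gain_sigprob_le0 p i si x : sigprob mu i si <= 0 -> gain p i si x = 0.
Proof.
move=> sp_le0; apply: big1 => s /eqP s_i; apply: big1 => k _.
suff -> : mu s k = 0 by rewrite mul0r.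
by apply/le_anti; rewrite mu_ge0 andbT (le_trans _ sp_le0) // -s_i mu_le_sigprob.
Qed.

Lemma BNE_gain_le p i si x : BNE omega mu p -> 0 < sigprob mu i si ->
  gain p i si x <= gain p i si (p i si).
Proof.
by move=> eq_p sp_gt0; have := eq_p i si sp_gt0 x; rewrite !cond_payoffE ler_pM2r ?invr_gt0.
Qed.

Lemma BNE_gain_ge0 p i si : BNE omega mu p -> 0 < sigprob mu i si ->
  0 <= gain p i si (p i si).
Proof. by move=> eq_p sp_gt0; rewrite -(gain0 p si) BNE_gain_le. Qed.

Lemma wins_dev_prices p j s x w : x <= w ->
  (forall l, l != j -> x <= p l (s l)) -> wins (dev_prices p s j x) w j.
Proof.
move=> le_w le_rivals; rewrite /wins dev_prices_at le_w; apply/forallP => l.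
have [-> | ne_lj] := eqVneq l j; first by rewrite dev_prices_at.
by rewrite dev_prices_other // le_rivals.
Qed.

Lemma win_mass_ge p j s k x : x <= omega k ->
  (forall l, l != j -> x <= p l (s l)) -> mu s k <= win_mass p j (s j) x.
Proof.
move=> le_w le_rivals; have win := wins_dev_prices le_w le_rivals.
rewrite -[mu s k]mulr1 -[1]/((true : bool)%:R) -win.
by apply: ler_dsum_term => // s' k' _; rewrite mulr_ge0.
Qed.

Lemma gain_undercut p j t x c : 0 < c < x -> c * win_mass p j t x <= gain p j t c.
Proof.
case/andP=> c_gt0 lt_cx; rewrite mulr_sumr; apply: ler_sum => s _.
rewrite mulr_sumr; apply: ler_sum => k _.
rewrite mulrCA; apply: ler_wpM2l => //; rewrite /payoff dev_prices_at ler_pM2l //.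
case: (boolP (wins _ _ _)) => [/andP[le_w /forallP lowest] | _]; last exact: demand_ge0.
rewrite dev_prices_at in le_w lowest; rewrite demand_eq1 ?dev_prices_at //.
  exact: le_trans (ltW lt_cx) le_w.
move=> l ne_lj; have := lowest l; rewrite !dev_prices_other //; exact: lt_le_trans.
Qed.

Lemma gain_tie p i j s k x : 0 <= x -> j != i -> p i (s i) = x -> x <= omega k ->
  (forall l, l != j -> x <= p l (s l)) ->
  gain p j (s j) x + x * mu s k / 2 <= x * win_mass p j (s j) x.
Proof.
move=> x_ge0 ne_ji tie le_w le_rivals.
pose lost s' k' := (wins (dev_prices p s' j x) (omega k') j)%:R
                   - demand (dev_prices p s' j x) (omega k') j.
have margin : x * win_mass p j (s j) x - gain p j (s j) x =
    \sum_(s' : profile S | s' j == s j) \sum_(k' < m) mu s' k' * (x * lost s' k').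
  rewrite /win_mass /gain mulr_sumr -sumrB; apply: eq_bigr => s' _.
  rewrite mulr_sumr -sumrB; apply: eq_bigr => k' _.
  by rewrite /lost /payoff dev_prices_at; ring.
have lost_half : 2^-1 <= lost s k.
  rewrite /lost (wins_dev_prices le_w le_rivals) /= mulr1n.
  have := demand_tie (pr := dev_prices p s j x) (omega k) ne_ji.
  have ne_ij : i != j by rewrite eq_sym.
  by rewrite dev_prices_at dev_prices_other ?tie // => /(_ erefl); lra.
have : mu s k * (x * lost s k) <= x * win_mass p j (s j) x - gain p j (s j) x.
  rewrite margin; apply: ler_dsum_term => // s' k' _.
  by rewrite mulr_ge0 ?mulr_ge0 // subr_ge0 demand_le_wins.
have : 0 <= mu s k * x by rewrite mulr_ge0.
nra.
Qed.

Lemma BNE_undercut p j t x : BNE omega mu p -> 0 < sigprob mu j t -> 0 < x ->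
  x * win_mass p j t x <= gain p j t (p j t).
Proof.
move=> eq_p sp_gt0 x_gt0; apply: ler_mul_sup => // [|c c_in].
  by apply: sumr_ge0 => s _; apply: sumr_ge0 => k _; rewrite mulr_ge0 ?ler0n.
exact: le_trans (gain_undercut _ _ c_in) (BNE_gain_le _ eq_p sp_gt0).
Qed.

Lemma BNE_price_ge0 p s k i : BNE omega mu p -> 0 <= omega k -> 0 < mu s k ->
  0 <= p i (s i).
Proof.
move=> eq_p w_ge0 mu_gt0; rewrite leNgt; apply/negP => pi_lt0.
case: (@arg_minP _ _ _ i xpredT (fun l => p l (s l)) isT) => l _ lowest.
have pl_lt0 : p l (s l) < 0 := le_lt_trans (lowest i isT) pi_lt0.
have win : wins (prices p s) (omega k) l.
  by rewrite /wins /prices (le_trans (ltW pl_lt0)) //; apply/forallP => j; exact: lowest.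
have loss : mu s k * payoff (prices p s) (omega k) l < 0.
  by rewrite pmulr_rlt0 // /payoff nmulr_rlt0 ?demand_gt0.
have gain_le : gain p l (s l) (p l (s l)) <= mu s k * payoff (prices p s) (omega k) l.
  rewrite -(eq_payoff _ (dev_prices_self p s l)) -lerN2 /gain -sumrN.
  under eq_bigr do rewrite -sumrN.
  apply: (ler_dsum_term (F := fun s' k' => - (mu s' k' * _))) => // s' k' _.
  rewrite oppr_ge0 /payoff dev_prices_at mulr_ge0_le0 //.
  by rewrite mulr_le0_ge0 ?demand_ge0 // ltW.
have := BNE_gain_ge0 eq_p (lt_le_trans mu_gt0 (mu_le_sigprob l s k)).
lra.
Qed.

Section Oligopoly.
Hypothesis n_gt1 : (1 < n)%N.

Lemma zero_price_BNE : BNE omega mu (fun i (_ : S i) => 0).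
Proof.
move=> i si sp_gt0 x; rewrite !cond_payoffE gain0 mul0r.
apply: mulr_le0_ge0; last by rewrite invr_ge0 ltW.
have [j ne_ji] := exists_neq_ord n_gt1 i.
rewrite /gain; apply: sumr_le0 => s _; apply: sumr_le0 => k _; rewrite mulr_ge0_le0 //.
have rival_le0 : dev_prices (fun i _ => 0) s i x j <= 0 by rewrite dev_prices_other.
exact: payoff_le0 rival_le0.
Qed.

Lemma BNE_gain_le0 p : BNE omega mu p -> forall i si, gain p i si (p i si) <= 0.
Proof.
move=> eq_p i0 si0; rewrite leNgt; apply/negP => gain0_gt0.
pose profitable (t : {i : 'I_n & S i}) :=
  0 < gain p (tag t) (tagged t) (p (tag t) (tagged t)).
case: (@arg_maxP _ _ _ (existT _ i0 si0) profitable (fun t => p (tag t) (tagged t)) gain0_gt0).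
move=> -[i si] gain_gt0 highest; rewrite /profitable /= in gain_gt0.
have [s /eqP s_i /sumr_gt0_exists [k _ term_gt0]] := sumr_gt0_exists gain_gt0.
have mu_gt0 : 0 < mu s k.
  by rewrite lt_def mu_ge0 andbT; apply: contraTneq term_gt0 => ->; rewrite mul0r ltxx.
rewrite pmulr_rgt0 // -s_i (eq_payoff _ (dev_prices_self p s i)) in term_gt0.
have [x_gt0 /andP[le_w /forallP lowest]] := payoff_gt0 term_gt0.
rewrite /prices s_i in x_gt0 le_w lowest.
have [j ne_ji] := exists_neq_ord n_gt1 i.
have sp_j : 0 < sigprob mu j (s j) := lt_le_trans mu_gt0 (mu_le_sigprob j s k).
have rivals_ge l : l != j -> p i si <= p l (s l) by move=> _; exact: lowest.
have W_gt0 := lt_le_trans mu_gt0 (win_mass_ge le_w rivals_ge).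
have undercut := BNE_undercut eq_p sp_j x_gt0.
have pj_eq : p j (s j) = p i si.
  apply/le_anti; rewrite lowest andbT; apply: (highest (existT _ j (s j))).
  by apply: lt_le_trans undercut; rewrite mulr_gt0.
rewrite pj_eq in undercut.
have := gain_tie (ltW x_gt0) ne_ji (congr1 (p i) s_i) le_w rivals_ge.
have : 0 < p i si * mu s k / 2 by rewrite divr_gt0 ?mulr_gt0.
lra.
Qed.

Lemma BNE_exp_profit_eq0 p : BNE omega mu p -> forall i, exp_profit omega mu p i = 0.
Proof.
move=> eq_p i; rewrite /exp_profit (partition_big (fun s : profile S => s i) xpredT) //=.
apply: big1 => si _.
have <- : gain p i si (p i si) = \sum_(s : profile S | s i == si) \sum_(k < m)
    mu s k * payoff (prices p s) (omega k) i.
  by apply: eq_bigr => s /eqP <-; apply: eq_bigr => k _; rewrite (eq_payoff _ (dev_prices_self p s i)).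
have [sp_gt0 | sp_le0] := ltrP 0 (sigprob mu i si); last exact: gain_sigprob_le0.
by apply/le_anti; rewrite BNE_gain_le0 // BNE_gain_ge0.
Qed.

End Oligopoly.

End Game.

Lemma BNE_duopoly_eq0 (R : realFieldType) m (S : 'I_2 -> finType)
    (omega : 'I_m -> R) (mu : profile S -> 'I_m -> R) (p : strategy R S) :
  (forall s k, 0 <= mu s k) -> (forall k, 0 < omega k) -> BNE omega mu p ->
  forall i si, 0 < sigprob mu i si -> p i si = 0.
Proof.
move=> mu_ge0 omega_gt0 eq_p i si sp_gt0.
have [s /eqP s_i /sumr_gt0_exists [k _ mu_gt0]] := sumr_gt0_exists sp_gt0.
have [j ne_ji] := exists_neq_ord (isT : (1 < 2)%N) i.
rewrite -s_i; apply/le_anti; rewrite (BNE_price_ge0 mu_ge0 i eq_p (ltW (omega_gt0 k)) mu_gt0) andbT.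
rewrite leNgt; apply/negP => pi_gt0.
pose x := Num.min (p i (s i)) (omega k).
have x_gt0 : 0 < x by rewrite lt_min pi_gt0 omega_gt0.
have rival_ge l : l != j -> x <= p l (s l).
  by move=> ne_lj; rewrite (ord2_neq ne_ji ne_lj) ge_min lexx.
have x_le_w : x <= omega k by rewrite ge_min lexx orbT.
have W_gt0 := lt_le_trans mu_gt0 (win_mass_ge mu_ge0 x_le_w rival_ge).
have sp_j := lt_le_trans mu_gt0 (mu_le_sigprob mu_ge0 j s k).
have := BNE_undercut mu_ge0 eq_p sp_j x_gt0.
have := BNE_gain_le0 mu_ge0 (isT : (1 < 2)%N) eq_p (s j).
have := mulr_gt0 x_gt0 W_gt0.
lra.
Qed.

Lemma cond_payoff_monopoly (R : realFieldType) m (omega : 'I_m -> R) (S : 'I_1 -> finType)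
    (mu : profile S -> 'I_m -> R) (p : strategy R S) (si : S ord0) x :
  cond_payoff omega mu p ord0 si x = x * cond_prob_ge omega mu ord0 si x.
Proof.
rewrite /cond_payoff /cond_prob_ge mulrA; congr (_ / _).
rewrite mulr_sumr; apply: eq_bigr => s _; rewrite mulr_sumr; apply: eq_bigr => k _.
by rewrite /payoff demand_monopoly dev_prices_at mulrCA.
Qed.

Theorem proposition1 (R : realFieldType) (m : nat) (omega : 'I_m -> R)
    (omega_inj : injective omega) (omega_pos : forall k, 0 < omega k) :
  (* (1) n >= 2 firms: all-zero pricing is a BNE, and every BNE gives zero profit *)
  (forall (n : nat) (S : 'I_n -> finType) (mu : profile S -> 'I_m -> R),
      (1 < n)%N -> is_info mu ->
      BNE omega mu (fun (i : 'I_n) (_ : S i) => 0) /\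
      (forall p : strategy R S, BNE omega mu p ->
         forall i : 'I_n, exp_profit omega mu p i = 0)) /\
  (* (2) duopoly: the all-zero BNE is unique (on signals of positive probability) *)
  (forall (S : 'I_2 -> finType) (mu : profile S -> 'I_m -> R),
      is_info mu ->
      forall p : strategy R S, BNE omega mu p ->
        forall (i : 'I_2) (si : S i), 0 < sigprob mu i si -> p i si = 0) /\
  (* (3) monopoly: optimal iff p(s) maximizes x * Prob(omega >= x | s) *)
  (forall (S : 'I_1 -> finType) (mu : profile S -> 'I_m -> R),
      is_info mu ->
      forall p : strategy R S,
        BNE omega mu p <->
        (forall s : S ord0, 0 < sigprob mu ord0 s ->
           forall x : R,
             x * cond_prob_ge omega mu ord0 s x
             <= p ord0 s * cond_prob_ge omega mu ord0 s (p ord0 s))).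
Proof.
split; [|split].
- move=> n S mu n_gt1 [mu_ge0 _]; split; first exact: zero_price_BNE.
  exact: BNE_exp_profit_eq0.
- by move=> S mu [mu_ge0 _] p; apply: BNE_duopoly_eq0.
- move=> S mu _ p; split=> [eq_p s | opt i]; last rewrite (ord1 i) => s.
  + by move=> sp_gt0 x; rewrite -!(cond_payoff_monopoly _ _ p); exact: eq_p.
  + by move=> sp_gt0 x; rewrite !(cond_payoff_monopoly _ _ p); exact: opt.
Qed.
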